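(* Let $\bm D\in\mathbb R^{n\times d}$ ($n\le d$) satisfy $\bm D\bm D^\top=\bm I_n$, let $\bar{\bm D}\in\mathbb R^{(d-n)\times d}$ satisfy $\bar{\bm D}\bm D^\top=\bm 0$, $\bar{\bm D}\bar{\bm D}^\top=\bm I_{d-n}$, and let $\bm A\in\mathbb R^{m\times n}$. Let $s_1,s_2$ be positive integers with $s_1,s_2\le n$ and let $\eta>0$. Suppose $\bm u,\bm v\in\mathbb R^d$ satisfy $\mathrm{supp}(\bm u)\cap\mathrm{supp}(\bm v)=\emptyset$, $\bm u$ is $s_1$-sparse, $\|\bm v\|_1-\|\bm v\|_2\le(s_2-\sqrt{s_2})\eta$ and $\|\bm v\|_\infty\le\eta$. Then $$|\langle\bm A\bm D\bm u,\bm A\bm D\bm v\rangle+\langle\bar{\bm D}\bm u,\bar{\bm D}\bm v\rangle|\le\Big(1+\frac{\sqrt2}{2}\Big)\eta\sqrt{s_2}\,\theta_{s_1,s_2}\|\bm u\|_2.$$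
   Context: A vector is $s$-sparse if it has at most $s$ nonzero entries; $\mathrm{supp}(\bm v)$ is the set of indices of nonzero entries. The $\bm D$-restricted orthogonality constant $\theta_{s,t}$ (for $\bm A$ and $\bm D$) is the smallest nonnegative number such that $|\langle\bm A\bm D\bm u,\bm A\bm D\bm v\rangle-\langle\bm D\bm u,\bm D\bm v\rangle|\le\theta_{s,t}\|\bm u\|_2\|\bm v\|_2$ for all $s$-sparse $\bm u\in\mathbb R^d$ and $t$-sparse $\bm v\in\mathbb R^d$. *)

From HB Require Import structures.
From mathcomp Require Import all_boot all_order all_algebra.
From mathcomp Require Import boolp classical_sets reals.
Set Implicit Arguments. Unset Strict Implicit. Unset Printing Implicit Defensive.
Import Order.TTheory GRing.Theory Num.Theory.
Local Open Scope ring_scope.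
Local Open Scope classical_set_scope.

Section Defs.
Variable R : realType.

Definition dotv (k : nat) (x y : 'cV[R]_k) : R := \sum_(i < k) x i 0 * y i 0.
Definition norm2 (k : nat) (x : 'cV[R]_k) : R := Num.sqrt (\sum_(i < k) x i 0 ^+ 2).
Definition norm1 (k : nat) (x : 'cV[R]_k) : R := \sum_(i < k) `|x i 0|.
Definition normInf (k : nat) (x : 'cV[R]_k) : R := \big[Num.max/0]_(i < k) `|x i 0|.

Definition supp (k : nat) (x : 'cV[R]_k) : {set 'I_k} := [set i | x i 0 != 0].
Definition sparse (k s : nat) (x : 'cV[R]_k) : Prop := (#|supp x| <= s)%N.

(* D-restricted orthogonality constant theta_{s,t}: the smallest nonnegative
   number c with |<ADu,ADv> - <Du,Dv>| <= c ||u||_2 ||v||_2 for all s-sparse u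
   and t-sparse v in R^d; rendered as the infimum of the set of such c. *)
Definition ROC_bound (m n d : nat) (A : 'M[R]_(m, n)) (D : 'M[R]_(n, d))
    (s t : nat) (c : R) : Prop :=
  0 <= c /\ forall u v : 'cV[R]_d, sparse s u -> sparse t v ->
    `| dotv (A *m (D *m u)) (A *m (D *m v)) - dotv (D *m u) (D *m v) |
      <= c * norm2 u * norm2 v.

Definition theta (m n d : nat) (A : 'M[R]_(m, n)) (D : 'M[R]_(n, d))
    (s t : nat) : R := inf [set c : R | ROC_bound A D s t c].

End Defs.

(* The residual g := (AD)^T AD u - D^T D u represents the form
   w |-> <ADu, ADw> - <Du, Dw>, and since D^T D + Dbar^T Dbar = I and u, v
   have disjoint supports, the left-hand side is |<g, v>|.  Every s2-sparse w
   satisfies |<g, w>| <= theta ||u||_2 ||w||_2.  Peeling off the s2 largest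
   entries of v block by block upgrades this to
   |<g, v>| <= theta ||u||_2 (||v||_1 / sqrt s2 + sqrt s2 / 2 ||v||_inf),
   and the hypothesis on ||v||_1 - ||v||_2 forces ||v||_1 <= s2 eta. *)
From HB Require Import structures.
From mathcomp Require Import all_boot all_order all_algebra.
From mathcomp Require Import boolp classical_sets reals.
From mathcomp Require Import ring lra.
Import Order.TTheory GRing.Theory Num.Theory.
Local Open Scope ring_scope.
Set Implicit Arguments. Unset Strict Implicit.

Section Norms.
Variable R : realType.

Lemma dotvE k (x y : 'cV[R]_k) : dotv x y = (x^T *m y) 0 0.
Proof. by rewrite /dotv !mxE; apply: eq_bigr => i _; rewrite !mxE. Qed.

Lemma dotv_disjoint_supp k (x y : 'cV[R]_k) : [disjoint supp x & supp y] -> dotv x y = 0.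
Proof.
move=> xy; rewrite /dotv big1 // => i _.
have [xi | ] := boolP (i \in supp x); last by rewrite inE negbK => /eqP ->; rewrite mul0r.
by move: (disjointFr xy xi); rewrite inE => /negbFE/eqP ->; rewrite mulr0.
Qed.

Lemma norm2_ge0 k (x : 'cV[R]_k) : 0 <= norm2 x.
Proof. exact: sqrtr_ge0. Qed.

Lemma norm1_ge0 k (x : 'cV[R]_k) : 0 <= norm1 x.
Proof. by apply: sumr_ge0. Qed.

Lemma normInf_ge0 k (x : 'cV[R]_k) : 0 <= normInf x.
Proof. by rewrite /normInf; elim/big_ind: _ => // a b a0 b0; rewrite le_max a0. Qed.

Lemma le_normInf k (x : 'cV[R]_k) i : `|x i 0| <= normInf x.
Proof. by rewrite /normInf (bigD1 i) //= le_max lexx. Qed.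

Lemma normInf_le k (x : 'cV[R]_k) b : 0 <= b -> (forall i, `|x i 0| <= b) -> normInf x <= b.
Proof. by move=> b0 xb; rewrite /normInf; elim/big_ind: _ => // a c ab cb; rewrite ge_max ab. Qed.

Lemma le_norm2 k (x : 'cV[R]_k) i : `|x i 0| <= norm2 x.
Proof.
have sq0 j : 0 <= x j 0 ^+ 2 by rewrite sqr_ge0.
rewrite /norm2 -sqrtr_sqr ler_sqrt; last exact: sumr_ge0.
by rewrite (bigD1 i) //= lerDl sumr_ge0.
Qed.

Lemma sqr_norm2_le k (x : 'cV[R]_k) : norm2 x ^+ 2 <= normInf x * norm1 x.
Proof.
rewrite /norm2 sqr_sqrtr; last by apply: sumr_ge0 => i _; rewrite sqr_ge0.
rewrite /norm1 mulr_sumr; apply: ler_sum => i _.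
by rewrite -real_normK ?num_real // expr2 ler_wpM2r // le_normInf.
Qed.

(* With r = sqrt s and t = S1 / r, the square of the right-hand side minus
   (a + b) t r - r^2 a b is (t - b r)^2 + r^2 b (a - b) + r^2 (a - b)^2 / 4. *)
Lemma sqrt_le_shifted_mean (s : nat) (S1 S2 a b : R) :
  (0 < s)%N -> 0 <= b -> b <= a -> 0 <= S1 ->
  S2 <= (a + b) * S1 - s%:R * a * b ->
  Num.sqrt S2 + Num.sqrt s%:R / 2 * b <= S1 / Num.sqrt s%:R + Num.sqrt s%:R / 2 * a.
Proof.
move=> s0 b0 ba S10 S2le; set r := Num.sqrt s%:R.
have r0 : 0 < r by rewrite sqrtr_gt0 ltr0n.
have rr : s%:R = r ^+ 2 by rewrite sqr_sqrtr // ler0n.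
set t := S1 / r; have S1t : S1 = t * r by rewrite /t mulfVK // gt_eqF.
have t0 : 0 <= t by rewrite /t divr_ge0 // ltW.
rewrite rr S1t in S2le.
suff : Num.sqrt S2 <= t + r / 2 * (a - b) by lra.
have rhs0 : 0 <= t + r / 2 * (a - b) by rewrite addr_ge0 // mulr_ge0 ?subr_ge0 // divr_ge0 // ltW.
rewrite -(ger0_norm rhs0) -sqrtr_sqr ler_sqrt ?sqr_ge0 //; apply: (le_trans S2le).
have h1 : 0 <= (t - b * r) ^+ 2 by rewrite sqr_ge0.
have h2 : 0 <= r ^+ 2 * b * (a - b) by rewrite mulr_ge0 ?subr_ge0 // mulr_ge0 // sqr_ge0.
have h3 : 0 <= r ^+ 2 * (a - b) ^+ 2 / 4 by rewrite divr_ge0 // mulr_ge0 // sqr_ge0.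
have -> : (t + r / 2 * (a - b)) ^+ 2 = (a + b) * (t * r) - r ^+ 2 * a * b
  + ((t - b * r) ^+ 2 + r ^+ 2 * b * (a - b) + r ^+ 2 * (a - b) ^+ 2 / 4) by field.
lra.
Qed.

Lemma norm2_le_norm1_normInf k s (x : 'cV[R]_k) : (0 < s)%N ->
  norm2 x <= norm1 x / Num.sqrt s%:R + Num.sqrt s%:R / 2 * normInf x.
Proof.
move=> s0; have sqr0 i : 0 <= x i 0 ^+ 2 by rewrite sqr_ge0.
have := sqrt_le_shifted_mean (S2 := \sum_i x i 0 ^+ 2) s0 (lexx 0)
  (normInf_ge0 x) (norm1_ge0 x).
rewrite !mulr0 !addr0 subr0; apply.
by rewrite -(sqr_sqrtr (sumr_ge0 _ (fun i _ => sqr0 i))) sqr_norm2_le.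
Qed.

Lemma norm1_le_of_norm1_sub_norm2 k s (x : 'cV[R]_k) (eta : R) : (0 < s)%N -> 0 < eta ->
  normInf x <= eta -> norm1 x - norm2 x <= (s%:R - Num.sqrt s%:R) * eta ->
  norm1 x <= s%:R * eta.
Proof.
move=> s0 eta0 xinf x12; set r := Num.sqrt s%:R in x12.
have r1 : 1 <= r by rewrite -sqrtr1 ler_sqrt ?ler0n // ler1n.
have rr : s%:R = r ^+ 2 by rewrite sqr_sqrtr // ler0n.
rewrite rr in x12 *.
have S10 := norm1_ge0 x.
set q := Num.sqrt (eta * norm1 x).
have q0 : 0 <= q := sqrtr_ge0 _.
have qq : q ^+ 2 = eta * norm1 x by rewrite sqr_sqrtr // mulr_ge0 // ltW.
have norm2_le_q : norm2 x <= q.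
  have sq : norm2 x ^+ 2 <= eta * norm1 x := le_trans (sqr_norm2_le x) (ler_wpM2r S10 xinf).
  by rewrite -(ger0_norm (norm2_ge0 x)) -sqrtr_sqr ler_sqrt // mulr_ge0 // ltW.
have q_quad : q ^+ 2 - q * eta <= (r ^+ 2 - r) * eta ^+ 2.
  have : (norm1 x - q) * eta <= (r ^+ 2 - r) * eta * eta by apply: ler_wpM2r; [exact: ltW | lra].
  by rewrite mulrBl (mulrC (norm1 x)) -qq expr2; lra.
have q_le : q <= r * eta.
  (* q^2 - q eta - (r^2 - r) eta^2 = (q - r eta)(q + r eta - eta) and the second factor is > 0 *)
  rewrite leNgt; apply/negP => lt.
  have : 0 < (q - r * eta) * (q + r * eta - eta).
    have : 0 <= (r - 1) * eta by apply: mulr_ge0; [lra | exact: ltW].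
    have : 0 < r * eta by apply: mulr_gt0; [lra | done].
    by move=> *; apply: mulr_gt0; lra.
  have -> : (q - r * eta) * (q + r * eta - eta) = q ^+ 2 - q * eta - (r ^+ 2 - r) * eta ^+ 2 by ring.
  lra.
rewrite -(ler_pM2l eta0) -qq; have -> : eta * (r ^+ 2 * eta) = (r * eta) ^+ 2 by ring.
by rewrite ler_pXn2r // nnegrE mulr_ge0 // ?ltW //; lra.
Qed.

(* The bound in fact holds with [3/2] in place of [1 + sqrt 2 / 2]. *)
Lemma norm1_normInf_mix_le k s (x : 'cV[R]_k) (eta : R) : (0 < s)%N -> 0 < eta ->
  normInf x <= eta -> norm1 x - norm2 x <= (s%:R - Num.sqrt s%:R) * eta ->
  norm1 x / Num.sqrt s%:R + Num.sqrt s%:R / 2 * normInf x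
    <= (1 + Num.sqrt 2 / 2) * eta * Num.sqrt s%:R.
Proof.
move=> s0 eta0 xinf x12; set r := Num.sqrt s%:R.
have r_gt0 : 0 < r by rewrite sqrtr_gt0 ltr0n.
have sqrt2_ge1 : 1 <= Num.sqrt 2 :> R by rewrite -[X in X <= _]sqrtr1 ler_sqrt //; lra.
have x1 : norm1 x / r <= r * eta.
  rewrite ler_pdivrMr // mulrAC -expr2 sqr_sqrtr ?ler0n //.
  exact: norm1_le_of_norm1_sub_norm2 s0 eta0 xinf x12.
have xinf' : r / 2 * normInf x <= r / 2 * eta by rewrite ler_wpM2l // divr_ge0 ?ltW.
have : r * eta <= Num.sqrt 2 * (r * eta) by rewrite ler_peMl // mulr_ge0 ?ltW.
have -> : (1 + Num.sqrt 2 / 2) * eta * r = r * eta + Num.sqrt 2 * (r * eta) / 2 by field.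
lra.
Qed.

End Norms.

Section Restriction.
Variable R : realType.

Definition restrictv k (T : {set 'I_k}) (x : 'cV[R]_k) : 'cV[R]_k :=
  \col_i (if i \in T then x i 0 else 0).

Lemma supp_restrictv k (x : 'cV[R]_k) T : supp (restrictv T x) = supp x :&: T.
Proof. by apply/setP => i; rewrite !inE !mxE; case: (i \in T); rewrite ?eqxx ?andbT ?andbF. Qed.

Lemma dotv_restrictv_split k (g x : 'cV[R]_k) T :
  dotv g x = dotv g (restrictv T x) + dotv g (restrictv (~: T) x).
Proof.
rewrite /dotv -big_split; apply: eq_bigr => i _; rewrite !mxE inE.
by case: (i \in T); rewrite /= ?mulr0 ?addr0 ?add0r.
Qed.

Lemma norm1_restrictv_split k (x : 'cV[R]_k) T :
  norm1 x = norm1 (restrictv T x) + norm1 (restrictv (~: T) x).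
Proof.
rewrite /norm1 -big_split; apply: eq_bigr => i _; rewrite !mxE inE.
by case: (i \in T); rewrite /= normr0 ?addr0 ?add0r.
Qed.

Lemma norm1_restrictv k (x : 'cV[R]_k) T : norm1 (restrictv T x) = \sum_(i in T) `|x i 0|.
Proof.
rewrite /norm1 [RHS]big_mkcond; apply: eq_bigr => i _; rewrite !mxE.
by case: (i \in T); rewrite ?normr0.
Qed.

Lemma norm2_restrictv k (x : 'cV[R]_k) T :
  norm2 (restrictv T x) = Num.sqrt (\sum_(i in T) `|x i 0| ^+ 2).
Proof.
rewrite /norm2 [in RHS]big_mkcond /=; congr Num.sqrt; apply: eq_bigr => i _.
by rewrite !mxE; case: (i \in T); rewrite ?expr0n ?real_normK ?num_real.
Qed.

Lemma sum_sqr_le_interval k (T : {set 'I_k}) (a : 'I_k -> R) hi lo :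
  (forall i, i \in T -> lo <= a i <= hi) ->
  \sum_(i in T) a i ^+ 2 <= (hi + lo) * \sum_(i in T) a i - #|T|%:R * hi * lo.
Proof.
move=> aT.
have : 0 <= \sum_(i in T) ((hi + lo) * a i - hi * lo - a i ^+ 2).
  apply: sumr_ge0 => i /aT /andP [loa ahi].
  have -> : (hi + lo) * a i - hi * lo - a i ^+ 2 = (a i - lo) * (hi - a i) by ring.
  by rewrite mulr_ge0 // subr_ge0.
by rewrite !sumrB -mulr_sumr sumr_const -mulr_natl; lra.
Qed.

Lemma norm2_restrictv_block k s (x : 'cV[R]_k) (T : {set 'I_k}) (hi lo : R) :
  (0 < s)%N -> #|T| = s -> 0 <= lo -> lo <= hi ->
  (forall i, i \in T -> lo <= `|x i 0| <= hi) ->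
  norm2 (restrictv T x) + Num.sqrt s%:R / 2 * lo
    <= norm1 (restrictv T x) / Num.sqrt s%:R + Num.sqrt s%:R / 2 * hi.
Proof.
move=> s0 Ts lo0 lohi xT; rewrite norm2_restrictv norm1_restrictv.
apply: sqrt_le_shifted_mean => //; first exact: sumr_ge0.
by rewrite -Ts; apply: sum_sqr_le_interval.
Qed.

Lemma largest_entries k s (x : 'cV[R]_k) : (s <= #|supp x|)%N ->
  exists2 T : {set 'I_k}, T \subset supp x /\ #|T| = s &
    forall i j, i \in T -> j \notin T -> `|x j 0| <= `|x i 0|.
Proof.
move=> s_supp.
pose P (T : {set 'I_k}) := (T \subset supp x) && (#|T| <= s)%N.
pose F (T : {set 'I_k}) := \sum_(i in T) `|x i 0|.
have P0 : P finset.set0 by rewrite /P finset.sub0set cards0.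
have [T /andP [Tsupp Ts] Tmax] := arg_maxP F P0.
have Tlargest i j : i \in T -> j \notin T -> `|x j 0| <= `|x i 0|.
  move=> iT jT; rewrite leNgt; apply/negP => lt_ij.
  have jsupp : j \in supp x by rewrite inE -normr_gt0 (le_lt_trans _ lt_ij).
  have jTi : j \notin T :\ i by rewrite in_setD1 negb_and jT orbT.
  have : P (j |: (T :\ i)).
    rewrite /P finset.subUset finset.sub1set jsupp (fintype.subset_trans (finset.subsetDl _ _) Tsupp) /=.
    by move: Ts; rewrite (cardsD1 i T) iT cardsU1 jTi.
  by move/Tmax; rewrite /F big_setU1 //= (big_setD1 _ iT) /=; lra.
exists T => //; split => //; apply/eqP; rewrite eqn_leq Ts leqNgt /=.
apply/negP => Tlt; suff /subset_leq_card : supp x \subset T by rewrite leqNgt (leq_trans Tlt).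
apply/fintype.subsetP => j jsupp; apply/negPn/negP => jT.
have xj0 : 0 < `|x j 0| by rewrite normr_gt0; move: jsupp; rewrite inE.
have : P (j |: T) by rewrite /P finset.subUset finset.sub1set jsupp Tsupp cardsU1 jT add1n.
by move/Tmax; rewrite /F big_setU1 //= -/(F T); lra.
Qed.

(* Induction on the support, splitting off the s largest entries: since the
   remaining entries are at most those, the [sqrt s / 2 * lo] gained on the
   block absorbs the [normInf] term of the remainder. *)
Lemma dotv_le_norm1_normInf k s (g : 'cV[R]_k) (K : R) : (0 < s)%N -> 0 <= K ->
  (forall w, sparse s w -> `|dotv g w| <= K * norm2 w) ->
  forall x, `|dotv g x| <= K * (norm1 x / Num.sqrt s%:R + Num.sqrt s%:R / 2 * normInf x).
Proof.
move=> s0 K0 gsparse x; have [N] := ubnP #|supp x|; elim: N x => // N IH x /ltnSE xN.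
have [xs | /ltnW s_supp] := leqP #|supp x| s.
  exact: le_trans (gsparse x xs) (ler_wpM2l K0 (norm2_le_norm1_normInf x s0)).
have [T [Tsupp Ts] Tlargest] := largest_entries s_supp.
set y := restrictv T x; set z := restrictv (~: T) x.
have zsupp : (#|supp z| < #|supp x|)%N.
  rewrite supp_restrictv -finset.setDE -(cardsID T (supp x)) (finset.setIidPr Tsupp) Ts.
  by rewrite -addn1 addnC leq_add2r.
have ysparse : sparse s y by rewrite /sparse supp_restrictv (finset.setIidPr Tsupp) Ts.
have z_le_T i : i \in T -> normInf z <= `|x i 0|.
  move=> iT; apply: normInf_le => // j; rewrite mxE inE.
  by case: ifP => jT; [apply: Tlargest; rewrite ?jT | rewrite normr0].
have [i0 i0T] : exists i, i \in T.
  by apply/finset.set0Pn; apply: contraTneq s0 => T0; rewrite -Ts T0 cards0.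
have yblock : norm2 y + Num.sqrt s%:R / 2 * normInf z
    <= norm1 y / Num.sqrt s%:R + Num.sqrt s%:R / 2 * normInf x.
  apply: norm2_restrictv_block s0 Ts (normInf_ge0 z) _ _.
    exact: le_trans (z_le_T _ i0T) (le_normInf x i0).
  by move=> i iT; rewrite z_le_T // le_normInf.
rewrite (dotv_restrictv_split g x T) (norm1_restrictv_split x T) -/y -/z.
apply: le_trans (ler_normD _ _) _.
apply: le_trans (lerD (gsparse y ysparse) (IH z (leq_trans zsupp xN))) _.
by rewrite -mulrDr ler_wpM2l // mulrDl; lra.
Qed.

End Restriction.

Section RestrictedOrthogonality.
Variable R : realType.

Definition gram_gap m n d (A : 'M[R]_(m, n)) (D : 'M[R]_(n, d)) : 'M[R]_d :=
  (A *m D)^T *m (A *m D) - D^T *m D.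

Lemma dotv_gram_gap m n d (A : 'M[R]_(m, n)) (D : 'M[R]_(n, d)) (u w : 'cV[R]_d) :
  dotv (A *m (D *m u)) (A *m (D *m w)) - dotv (D *m u) (D *m w) =
  dotv (gram_gap A D *m u) w.
Proof.
have dotvBl (a b : 'cV[R]_d) : dotv (a - b) w = dotv a w - dotv b w.
  by rewrite /dotv -sumrB; apply: eq_bigr => i _; rewrite !mxE mulrBl.
by rewrite /gram_gap mulmxBl dotvBl !dotvE !trmx_mul !trmxK !mulmxA.
Qed.

Lemma bilinear_form_bound k (G : 'M[R]_k) (x y : 'cV[R]_k) :
  `|(x^T *m G *m y) 0 0| <= (\sum_j \sum_i `|G i j|) * norm2 x * norm2 y.
Proof.
rewrite mxE !mulr_suml; apply: le_trans (ler_norm_sum _ _ _) _; apply: ler_sum => j _.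
rewrite mxE normrM !mulr_suml.
apply: le_trans (ler_wpM2r (normr_ge0 _) (ler_norm_sum _ _ _)) _.
rewrite mulr_suml; apply: ler_sum => i _; rewrite !mxE normrM.
rewrite [_ * _ * `|y j 0|]mulrC mulrA [_ * `|G i j|]mulrC -!mulrA ler_wpM2l //.
by rewrite mulrC ler_pM ?le_norm2.
Qed.

Lemma ROC_bound_exists m n d (A : 'M[R]_(m, n)) (D : 'M[R]_(n, d)) s t :
  exists c, ROC_bound A D s t c.
Proof.
pose G := gram_gap A D.
exists (\sum_j \sum_i `|G^T i j|); split; first by do 2!apply: sumr_ge0 => ? _.
by move=> u w _ _; rewrite dotv_gram_gap dotvE trmx_mul; apply: bilinear_form_bound.
Qed.

Lemma le_theta_mul m n d (A : 'M[R]_(m, n)) (D : 'M[R]_(n, d)) s t (X C : R) :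
  0 <= C -> (forall c, ROC_bound A D s t c -> X <= c * C) -> X <= theta A D s t * C.
Proof.
move=> C0 XC; have [c0 c0_bound] := ROC_bound_exists A D s t.
have [Cpos | ] := ltrP 0 C; last first.
  move=> C_le0; have C_eq0 : C = 0 by apply/eqP; rewrite eq_le C_le0 C0.
  by have := XC _ c0_bound; rewrite C_eq0 !mulr0.
rewrite -ler_pdivrMr //; apply: lb_le_inf; first by exists c0.
by move=> c c_bound; rewrite ler_pdivrMr //; apply: XC.
Qed.

Lemma orthonormal_complement_resolution n d (D : 'M[R]_(n, d)) (Dbar : 'M[R]_(d - n, d)) :
  (n <= d)%N -> D *m D^T = 1%:M -> Dbar *m D^T = 0 -> Dbar *m Dbar^T = 1%:M ->
  D^T *m D + Dbar^T *m Dbar = 1%:M.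
Proof.
move=> nd DD DbarD DbarDbar; have DDbar : D *m Dbar^T = 0.
  by rewrite -[D]trmxK -trmx_mul DbarD trmx0.
have square_inverse k (Q : 'M[R]_(k, d)) : k = d -> Q *m Q^T = 1%:M -> Q^T *m Q = 1%:M.
  by move=> kd; subst k; apply: mulmx1C.
have := square_inverse _ (col_mx D Dbar) (subnKC nd).
rewrite tr_col_mx mul_row_col; apply.
by rewrite mul_col_row DD DbarD DbarDbar DDbar -scalar_mx_block.
Qed.

Lemma dotv_orthonormal_complement n d (D : 'M[R]_(n, d)) (Dbar : 'M[R]_(d - n, d))
    (u v : 'cV[R]_d) :
  D^T *m D + Dbar^T *m Dbar = 1%:M ->
  dotv (D *m u) (D *m v) + dotv (Dbar *m u) (Dbar *m v) = dotv u v.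
Proof.
move=> resolution.
have split_uv : u^T *m (D^T *m D) *m v + u^T *m (Dbar^T *m Dbar) *m v = u^T *m v.
  by rewrite -mulmxDl -mulmxDr resolution mulmx1.
by rewrite !dotvE -split_uv !trmx_mul !mulmxA [in RHS]mxE.
Qed.

End RestrictedOrthogonality.

Theorem proposition2 (R : realType) (m n d : nat)
  (D : 'M[R]_(n, d)) (Dbar : 'M[R]_(d - n, d)) (A : 'M[R]_(m, n))
  (s1 s2 : nat) (eta : R) (u v : 'cV[R]_d) :
  (n <= d)%N ->
  D *m D^T = 1%:M ->
  Dbar *m D^T = 0 ->
  Dbar *m Dbar^T = 1%:M ->
  (0 < s1)%N -> (0 < s2)%N -> (s1 <= n)%N -> (s2 <= n)%N ->
  0 < eta ->
  [disjoint supp u & supp v] ->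
  sparse s1 u ->
  norm1 v - norm2 v <= (s2%:R - Num.sqrt s2%:R) * eta ->
  normInf v <= eta ->
  `| dotv (A *m (D *m u)) (A *m (D *m v)) + dotv (Dbar *m u) (Dbar *m v) |
    <= (1 + Num.sqrt 2 / 2) * eta * Num.sqrt s2%:R * theta A D s1 s2 * norm2 u.
Proof.
move=> nd DD DbarD DbarDbar _ s2_gt0 _ _ eta_gt0 uv_disj u_sparse v12 v_inf.
set r := Num.sqrt s2%:R; set g := gram_gap A D *m u.
have r_gt0 : 0 < r by rewrite sqrtr_gt0 ltr0n.
have -> : dotv (A *m (D *m u)) (A *m (D *m v)) + dotv (Dbar *m u) (Dbar *m v) = dotv g v.
  have := dotv_orthonormal_complement u v
    (orthonormal_complement_resolution nd DD DbarD DbarDbar).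
  rewrite (dotv_disjoint_supp uv_disj) /g -dotv_gram_gap => uv_split; lra.
have v_mix := norm1_normInf_mix_le s2_gt0 eta_gt0 v_inf v12.
have -> : (1 + Num.sqrt 2 / 2) * eta * r * theta A D s1 s2 * norm2 u =
  theta A D s1 s2 * (norm2 u * ((1 + Num.sqrt 2 / 2) * eta * r)) by ring.
apply: le_theta_mul => [|c [c_ge0 c_roc]].
  apply: mulr_ge0 (norm2_ge0 u) (le_trans _ v_mix).
  have r_ge0 := ltW r_gt0.
  by rewrite addr_ge0 ?divr_ge0 ?norm1_ge0 // mulr_ge0 ?normInf_ge0 ?divr_ge0.
have g_sparse w : sparse s2 w -> `|dotv g w| <= c * norm2 u * norm2 w.
  by move=> w_sparse; rewrite -dotv_gram_gap; apply: c_roc.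
apply: le_trans (dotv_le_norm1_normInf s2_gt0 (mulr_ge0 c_ge0 (norm2_ge0 u)) g_sparse v) _.
by rewrite mulrA ler_wpM2l ?mulr_ge0 ?norm2_ge0.
Qed.
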